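(* Let $\mathrm{R}$ be a real closed field, $P,Q,R,S\in\mathrm{R}[X]$ with $P,Q$ not both $0$ and $R,S$ not both $0$, and $a,b\in\mathrm{R}$ with $a<b$. (i) If $a$ is a bad number for $P,Q,R,S$ and $b$ is not, then $\mathrm{Ind}_a^b(PR-QS,PS+QR)=\mathrm{Ind}_a^b(P,Q)+\mathrm{Ind}_a^b(R,S)-\tfrac12\mathrm{Sign}(PS+QR,QS,b)$. (ii) If $b$ is a bad number for $P,Q,R,S$ and $a$ is not, then $\mathrm{Ind}_a^b(PR-QS,PS+QR)=\mathrm{Ind}_a^b(P,Q)+\mathrm{Ind}_a^b(R,S)+\tfrac12\mathrm{Sign}(PS+QR,QS,a)$. (iii) If $a$ and $b$ are both bad numbers for $P,Q,R,S$, then $\mathrm{Ind}_a^b(PR-QS,PS+QR)=\mathrm{Ind}_a^b(P,Q)+\mathrm{Ind}_a^b(R,S)$.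
   Context: For nonzero $P\in\mathrm{R}[X]$ and $x\in\mathrm{R}$ write uniquely $P=(X-x)^{\mathrm{mult}_x(P)}P_x$ with $P_x(x)\neq0$. For $P\ne0$, $Q\neq0$ set $\mathrm{val}_x(P/Q)=\mathrm{mult}_x(P)-\mathrm{mult}_x(Q)$, and $\mathrm{val}_x(0/Q)=+\infty$. $\mathrm{Sign}(P,Q,x)=\mathrm{sign}(P_x(x)Q_x(x))$ if $P\ne0$, $Q\ne0$ and $\mathrm{val}_x(P/Q)=0$, and $0$ otherwise. $\mathrm{Ind}^+_x(P,Q)=\tfrac12\,\mathrm{sign}(P_x(x)Q_x(x))$ and $\mathrm{Ind}^-_x(P,Q)=\tfrac12(-1)^{\mathrm{val}_x(P/Q)}\mathrm{sign}(P_x(x)Q_x(x))$ if $P\ne0$, $Q\neq0$ and $\mathrm{val}_x(P/Q)<0$, both $0$ otherwise; $\mathrm{Ind}_x=\mathrm{Ind}^+_x-\mathrm{Ind}^-_x$; for $a<b$, $\mathrm{Ind}_a^b(P,Q)=\mathrm{Ind}_a^+(P,Q)+\sum_{x\in(a,b)}\mathrm{Ind}_x(P,Q)-\mathrm{Ind}_b^-(P,Q)$. A number $c\in\mathrm{R}$ is a bad number for $P,Q,R,S$ if $Q\ne0$, $S\neq0$, $\mathrm{val}_c(P/Q)=\mathrm{val}_c(R/S)<0$ and $\mathrm{val}_c((PS+QR)/(QS))=0$. *)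

From HB Require Import structures.
From mathcomp Require Import all_boot all_order all_algebra.
From mathcomp Require Import polyrcf.
Set Implicit Arguments. Unset Strict Implicit. Unset Printing Implicit Defensive.
Import Order.TTheory GRing.Theory Num.Theory.
Local Open Scope ring_scope.

Section Index.
Variable R : rcfType.
Implicit Types (P Q : {poly R}) (x a b : R).

Definition Pval P x : R := (P %/ ('X - x%:P) ^+ mup x P).[x].

(* val_x(P/Q) for Q <> 0 : None encodes +oo (case P = 0). *)
Definition valx P Q x : option int :=
  if P == 0 then None else Some ((mup x P)%:Z - (mup x Q)%:Z).

Definition SignPQ P Q x : R :=
  if (P != 0) && (Q != 0) && (valx P Q x == Some 0%Z)
  then Num.sg (Pval P x * Pval Q x) else 0.

Definition Ind_plus P Q x : R :=
  match valx P Q x with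
  | Some v => if (P != 0) && (Q != 0) && (v < 0)%R
              then 2^-1 * Num.sg (Pval P x * Pval Q x) else 0
  | None => 0
  end.

Definition Ind_minus P Q x : R :=
  match valx P Q x with
  | Some v => if (P != 0) && (Q != 0) && (v < 0)%R
              then 2^-1 * ((-1) ^+ `|v|%N * Num.sg (Pval P x * Pval Q x)) else 0
  | None => 0
  end.

Definition Ind_pt P Q x : R := Ind_plus P Q x - Ind_minus P Q x.

(* The sum over x in (a,b) has finite support: Ind_x(P,Q) <> 0 forces
   Q <> 0 and mult_x Q > mult_x P >= 0, i.e. x is a root of Q.  We sum over
   the (duplicate-free, sorted) list [roots Q a b] of roots of Q in ]a,b[
   (empty when Q = 0). *)
Definition Ind_ab P Q a b : R :=
  Ind_plus P Q a + \sum_(x <- roots Q a b) Ind_pt P Q x - Ind_minus P Q b.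

Definition bad_number P Q Rp S c : Prop :=
  Q != 0 /\ S != 0 /\
  (exists v : int, valx P Q c = Some v /\ valx Rp S c = Some v /\ (v < 0)%R) /\
  valx (P * S + Q * Rp) (Q * S) c = Some 0%Z.

End Index.

From HB Require Import structures.
From mathcomp Require Import all_boot all_order all_algebra.
From mathcomp Require Import polyrcf.
From mathcomp Require Import lra ring zify.
Set Implicit Arguments. Unset Strict Implicit. Unset Printing Implicit Defensive.
Import Order.TTheory GRing.Theory Num.Theory.
Local Open Scope ring_scope.

(* Write f = P/Q and g = R/S.  The pair (PR - QS, PS + QR) represents
   (fg - 1)/(f + g), the cotangent addition formula, so the statement compares
   the jumps of cot(u + v) with those of cot u and cot v.  A one-sided index at
   x only depends on the leading terms c (t - x)^m of the polynomials at x,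
   with m = mup x and c = Pval; a case analysis on these leading terms gives
     Ind+_x(PR - QS, PS + QR) = Ind+_x(P, Q) + Ind+_x(R, S) - sg U(x+)/2 + C(x)/2,
   where U = (PS + QR) QS, sg U(x+) is its sign just right of x, and C(x) is
   Sign(PS + QR, QS, x) except at bad numbers, where it is 0.  The left-sided
   formula is the same statement for the mirrored polynomials t |-> P(-t) at
   -x.  Summed over [a, b] the terms sg U(x+-) telescope, since U has no sign
   change between consecutive roots, and only C(a)/2 - C(b)/2 survives. *)

Section ResidualValue.
Variable R : rcfType.
Implicit Types (X Y E r : {poly R}) (x : R).

Lemma mup0 x : mup x (0 : {poly R}) = 0%N.
Proof. by rewrite /mup; case: arg_maxnP => //= -[i +] _ _; rewrite size_poly0; case: i. Qed.

Lemma mup_factor X x : X != 0 ->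
  exists2 r, ~~ root r x & X = r * ('X - x%:P) ^+ mup x X.
Proof.
move=> X0; have [m [r]] := multiplicity_XsubC X x; rewrite X0 /= => rNx defX.
by exists r; rewrite // {2}defX mupMr // mup_XsubCX eqxx.
Qed.

Lemma mup_mul_XsubCX r x m : ~~ root r x -> mup x (r * ('X - x%:P) ^+ m) = m.
Proof. by move=> rNx; rewrite mupMr // mup_XsubCX eqxx. Qed.

Lemma Pval_mul_XsubCX r x m : ~~ root r x -> Pval (r * ('X - x%:P) ^+ m) x = r.[x].
Proof.
by move=> rNx; rewrite /Pval mup_mul_XsubCX // mulpK // expf_neq0 ?polyXsubC_eq0.
Qed.

Lemma Pval0 x : Pval 0 x = 0.
Proof. by rewrite /Pval div0p horner0. Qed.

Lemma Pval_eq0 X x : (Pval X x == 0) = (X == 0).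
Proof.
have [->|X0] := eqVneq X 0; first by rewrite Pval0 eqxx.
have [r rNx defX] := mup_factor x X0.
by rewrite {1}defX Pval_mul_XsubCX // -rootE (negPf rNx).
Qed.

Lemma PvalM X Y x : Pval (X * Y) x = Pval X x * Pval Y x.
Proof.
have [->|X0] := eqVneq X 0; first by rewrite mul0r Pval0 mul0r.
have [->|Y0] := eqVneq Y 0; first by rewrite mulr0 Pval0 mulr0.
have [r rNx defX] := mup_factor x X0; have [s sNx defY] := mup_factor x Y0.
rewrite defX defY mulrACA -exprD !Pval_mul_XsubCX ?hornerM //.
by rewrite rootM negb_or rNx.
Qed.

Lemma mupN X x : mup x (- X) = mup x X.
Proof.
have [->|X0] := eqVneq X 0; first by rewrite oppr0.
have [r rNx defX] := mup_factor x X0.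
by rewrite {1}defX -mulNr mup_mul_XsubCX ?rootN.
Qed.

Lemma PvalC c x : Pval c%:P x = c.
Proof.
have [->|c0] := eqVneq c 0; first exact: Pval0.
by rewrite -[c%:P]mulr1 -(expr0 ('X - x%:P)) Pval_mul_XsubCX ?hornerC // rootC.
Qed.

Lemma PvalN X x : Pval (- X) x = - Pval X x.
Proof. by rewrite -mulN1r -polyCN PvalM PvalC mulN1r. Qed.

Lemma mupD_min X Y x : X + Y != 0 -> (minn (mup x X) (mup x Y) <= mup x (X + Y))%N.
Proof.
move=> XY0; have [->|X0] := eqVneq X 0; first by rewrite add0r geq_minr.
have [->|Y0] := eqVneq Y 0; first by rewrite addr0 geq_minl.
rewrite mup_geq // dvdp_add // -mup_geq //; [exact: geq_minl | exact: geq_minr].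
Qed.

Lemma mupD_lt X E x : X != 0 -> (mup x X < mup x E)%N ->
  [/\ X + E != 0, mup x (X + E) = mup x X & Pval (X + E) x = Pval X x].
Proof.
move=> X0 lt_XE; have [E0|E0] := eqVneq E 0; first by rewrite E0 mup0 ltn0 in lt_XE.
have [r rNx defX] := mup_factor x X0; have [s sNx defE] := mup_factor x E0.
pose k := (mup x E - mup x X)%N.
have k_gt0 : (0 < k)%N by rewrite subn_gt0.
have pX : Pval X x = r.[x] by rewrite {1}defX Pval_mul_XsubCX.
have tx : (r + s * ('X - x%:P) ^+ k).[x] = r.[x].
  by rewrite !hornerE subrr expr0n gtn_eqF // mulr0 addr0.
have tNx : ~~ root (r + s * ('X - x%:P) ^+ k) x by rewrite rootE tx.
have -> : X + E = (r + s * ('X - x%:P) ^+ k) * ('X - x%:P) ^+ mup x X.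
  by rewrite mulrDl -mulrA -exprD subnK ?(ltnW lt_XE) // -defX -defE.
rewrite mup_mul_XsubCX // Pval_mul_XsubCX // tx pX; split => //.
by rewrite mulf_neq0 ?expf_neq0 ?polyXsubC_eq0 //; apply: contraNneq tNx => ->; rewrite root0.
Qed.

Lemma mupD_eq X Y x : X != 0 -> Y != 0 -> mup x X = mup x Y ->
  Pval X x + Pval Y x != 0 ->
  [/\ X + Y != 0, mup x (X + Y) = mup x X & Pval (X + Y) x = Pval X x + Pval Y x].
Proof.
move=> X0 Y0 eq_XY; have [r rNx defX] := mup_factor x X0; have [s sNx defY] := mup_factor x Y0.
have pXY : Pval X x + Pval Y x = (r + s).[x].
  by rewrite {1}defX {1}defY !Pval_mul_XsubCX // hornerD.
rewrite pXY -rootE => tNx.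
have -> : X + Y = (r + s) * ('X - x%:P) ^+ mup x X by rewrite mulrDl -defX eq_XY -defY.
rewrite mup_mul_XsubCX // Pval_mul_XsubCX //; split => //.
by rewrite mulf_neq0 ?expf_neq0 ?polyXsubC_eq0 //; apply: contraNneq tNx => ->; rewrite root0.
Qed.

Lemma mupD_eq_cancel X Y x : X != 0 -> Y != 0 -> mup x X = mup x Y ->
  Pval X x + Pval Y x = 0 -> X + Y != 0 -> (mup x X < mup x (X + Y))%N.
Proof.
move=> X0 Y0 eq_XY; have [r rNx defX] := mup_factor x X0; have [s sNx defY] := mup_factor x Y0.
rewrite {1}defX {1}defY !Pval_mul_XsubCX // => /eqP; rewrite -hornerD -rootE => rs_x.
have -> : X + Y = (r + s) * ('X - x%:P) ^+ mup x X by rewrite mulrDl -defX eq_XY -defY.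
rewrite mulf_eq0 negb_or => /andP[rs0 _].
rewrite mupM ?expf_neq0 ?polyXsubC_eq0 // mup_XsubCX eqxx addnC -addn1 leq_add2l.
by rewrite -XsubC_dvd // dvdp_XsubCl.
Qed.

End ResidualValue.

Section Mirror.
Variable R : rcfType.
Implicit Types (X Y : {poly R}) (x : R).

Definition mirror X := X \Po - 'X.

(* X(t) has the sign of [Pval_left X x] for t < x close to x. *)
Definition Pval_left X x : R := (-1) ^+ mup x X * Pval X x.

Lemma Pval_left0 x : Pval_left 0 x = 0.
Proof. by rewrite /Pval_left Pval0 mulr0. Qed.

Lemma mirrorK : involutive mirror.
Proof. by move=> X; rewrite /mirror -comp_polyA raddfN /= comp_polyX opprK comp_polyXr. Qed.

Lemma mirror0 : mirror 0 = 0.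
Proof. exact: comp_poly0. Qed.

Lemma mirror_eq0 X : (mirror X == 0) = (X == 0).
Proof. by apply/eqP/eqP => [X0|->]; [rewrite -[X]mirrorK X0|]; rewrite mirror0. Qed.

Lemma mirrorM X Y : mirror (X * Y) = mirror X * mirror Y.
Proof. exact: comp_polyM. Qed.

Lemma mirrorD X Y : mirror (X + Y) = mirror X + mirror Y.
Proof. exact: comp_polyD. Qed.

Lemma mirrorB X Y : mirror (X - Y) = mirror X - mirror Y.
Proof. exact: comp_polyB. Qed.

Lemma horner_mirror X x : (mirror X).[- x] = X.[x].
Proof. by rewrite horner_comp hornerN hornerX opprK. Qed.

Lemma root_mirror X x : root (mirror X) (- x) = root X x.
Proof. by rewrite !rootE horner_mirror. Qed.

Lemma mirror_XsubCX x m :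
  mirror (('X - x%:P) ^+ m) = (-1) ^+ m *: ('X - (- x)%:P) ^+ m.
Proof.
rewrite /mirror rmorphXn /= comp_polyB comp_polyX comp_polyC -exprZn.
by rewrite scaleN1r polyCN opprK opprD.
Qed.

Lemma mirror_factor X x : X != 0 ->
  exists2 r, ~~ root r (- x) &
    [/\ mirror X = r * ('X - (- x)%:P) ^+ mup x X & r.[- x] = Pval_left X x].
Proof.
move=> X0; have [r rNx defX] := mup_factor x X0.
exists ((-1) ^+ mup x X *: mirror r); last split.
- by rewrite rootE hornerZ horner_mirror mulf_eq0 signr_eq0.
- by rewrite {1}defX mirrorM mirror_XsubCX -scalerAr -scalerAl.
- by rewrite hornerZ horner_mirror; congr (_ * _); rewrite {1}defX Pval_mul_XsubCX.
Qed.

Lemma mup_mirror X x : mup (- x) (mirror X) = mup x X.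
Proof.
have [->|X0] := eqVneq X 0; first by rewrite mirror0 !mup0.
by have [r rNx [-> _]] := mirror_factor x X0; rewrite mup_mul_XsubCX.
Qed.

Lemma Pval_mirror X x : Pval (mirror X) (- x) = Pval_left X x.
Proof.
have [->|X0] := eqVneq X 0; first by rewrite mirror0 Pval0 Pval_left0.
by have [r rNx [-> <-]] := mirror_factor x X0; rewrite Pval_mul_XsubCX.
Qed.

End Mirror.

Lemma sgr_sign_mul (R : realDomainType) k (a : R) :
  Num.sg ((-1) ^+ k * a) = (-1) ^+ k * Num.sg a.
Proof. by rewrite sgrM sgrX sgrN1. Qed.

Lemma sgr_sqrM (R : realDomainType) (d a : R) : d != 0 -> Num.sg (d * d * a) = Num.sg a.
Proof. by move=> d0; rewrite !sgrM -expr2 sqr_sg d0 mul1r. Qed.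

Lemma sgrMD (R : realDomainType) (f g : R) :
  Num.sg (f * g * (f + g)) = Num.sg f + Num.sg g - Num.sg (f + g).
Proof.
rewrite !sgrM; have [f_lt0|f_gt0|->] := ltrgtP f 0; last by rewrite sgr0 add0r; ring.
- have [g_lt0|g_gt0|->] := ltrgtP g 0; last by rewrite sgr0 addr0; ring.
  + by rewrite !ltr0_sg //; [ring | lra].
  + by rewrite (ltr0_sg f_lt0) (gtr0_sg g_gt0); ring.
- have [g_lt0|g_gt0|->] := ltrgtP g 0; last by rewrite sgr0 addr0; ring.
  + by rewrite (gtr0_sg f_gt0) (ltr0_sg g_lt0); ring.
  + by rewrite !gtr0_sg //; [ring | lra].
Qed.

Lemma sgr_cross (R : realFieldType) (p q r s : R) : q != 0 -> s != 0 ->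
  Num.sg (p * r * (p * s + q * r)) =
  Num.sg (p * q) + Num.sg (r * s) - Num.sg ((p * s + q * r) * (q * s)).
Proof.
move=> q0 s0; have qs0 : q * s != 0 by rewrite mulf_neq0.
set f := p / q; set g := r / s.
have -> : p * r * (p * s + q * r) = q * s * (q * s) * (f * g * (f + g)).
  by rewrite /f /g; field; rewrite s0 q0.
have -> : (p * s + q * r) * (q * s) = q * s * (q * s) * (f + g).
  by rewrite /f /g; field; rewrite s0 q0.
have -> : p * q = q * q * f by rewrite /f; field.
have -> : r * s = s * s * g by rewrite /g; field.
by rewrite !sgr_sqrM // sgrMD.
Qed.

Lemma cross_cancelE (R : fieldType) (p q r s : R) : s != 0 ->
  p * s + q * r = 0 -> p * r = - (q * s) * (r / s) ^+ 2.
Proof.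
move=> s0 /eqP; rewrite addr_eq0 => /eqP psE.
by rewrite -[p](mulfK s0) psE; field.
Qed.

Lemma sgr_cross_cancelM (R : realFieldType) (p q r s : R) : r != 0 -> s != 0 ->
  p * s + q * r = 0 -> Num.sg (p * r) = - Num.sg (q * s).
Proof.
move=> r0 s0 /(cross_cancelE s0) ->.
by rewrite sgrM sgrN sgrX sqr_sg mulf_neq0 ?invr_eq0 // mulr1.
Qed.

Lemma sgr_cross_cancelB (R : realFieldType) (p q r s : R) : s != 0 ->
  p * s + q * r = 0 -> Num.sg (p * r - q * s) = - Num.sg (q * s).
Proof.
move=> s0 /(cross_cancelE s0) ->.
have t_gt0 : 0 < (r / s) ^+ 2 + 1 by have := sqr_ge0 (r / s); lra.
have -> : - (q * s) * (r / s) ^+ 2 - q * s = - (q * s) * ((r / s) ^+ 2 + 1) by ring.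
by rewrite sgrM (gtr0_sg t_gt0) mulr1 sgrN.
Qed.

Section IndexAtPoint.
Variable R : rcfType.
Implicit Types (X Y : {poly R}) (x : R).

Lemma Ind_plusE X Y x : Ind_plus X Y x =
  if [&& X != 0, Y != 0 & (mup x X < mup x Y)%N]
  then 2^-1 * Num.sg (Pval X x * Pval Y x) else 0.
Proof. by rewrite /Ind_plus /valx; case: eqP => //= _; rewrite subr_lt0 ltz_nat. Qed.

Lemma Ind_plus_lt X Y x : X != 0 -> Y != 0 -> (mup x X < mup x Y)%N ->
  Ind_plus X Y x = 2^-1 * Num.sg (Pval X x * Pval Y x).
Proof. by move=> X0 Y0 lt_XY; rewrite Ind_plusE X0 Y0 lt_XY. Qed.

Lemma Ind_plus_ge X Y x : (mup x Y <= mup x X)%N -> Ind_plus X Y x = 0.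
Proof. by move=> le_YX; rewrite Ind_plusE ltnNge le_YX !andbF. Qed.

Lemma Ind_plus0l Y x : Ind_plus 0 Y x = 0.
Proof. by rewrite Ind_plusE eqxx. Qed.

Lemma Ind_plus0r X x : Ind_plus X 0 x = 0.
Proof. by rewrite Ind_plus_ge // mup0. Qed.

Lemma SignPQE X Y x : SignPQ X Y x =
  if [&& X != 0, Y != 0 & mup x X == mup x Y]
  then Num.sg (Pval X x * Pval Y x) else 0.
Proof.
rewrite /SignPQ /valx; case: eqP => //= _.
by rewrite (inj_eq Some_inj) subr_eq0 eqz_nat andbC.
Qed.

Lemma SignPQ_neq X Y x : mup x X != mup x Y -> SignPQ X Y x = 0.
Proof. by move=> /negPf neq_XY; rewrite SignPQE neq_XY !andbF. Qed.

Lemma SignPQ0l Y x : SignPQ 0 Y x = 0.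
Proof. by rewrite SignPQE eqxx. Qed.

Lemma SignPQ_mirror X Y x : SignPQ (mirror X) (mirror Y) (- x) = SignPQ X Y x.
Proof.
rewrite !SignPQE !mirror_eq0 !mup_mirror !Pval_mirror /Pval_left.
case: ifP => // /and3P[_ _ /eqP ->].
by rewrite mulrACA -mulrA signrMK.
Qed.

Lemma Ind_minus_mirror X Y x : Ind_minus X Y x = Ind_plus (mirror X) (mirror Y) (- x).
Proof.
rewrite Ind_plusE !mirror_eq0 !mup_mirror !Pval_mirror /Pval_left /Ind_minus /valx.
case: eqP => //= _; rewrite subr_lt0 ltz_nat; case: ifP => // /andP[_ lt_XY].
rewrite -(subnKC (ltnW lt_XY)) distnEr ?leq_addr // addKn exprD.
by rewrite mulrACA signrMK sgr_sign_mul.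
Qed.

End IndexAtPoint.

Section LocalIndex.
Variables (R : rcfType) (x : R).
Implicit Types (X Y D E : {poly R}).

Lemma Ind_plusMl D X Y : D != 0 -> Ind_plus (D * X) (D * Y) x = Ind_plus X Y x.
Proof.
move=> D0; have [->|X0] := eqVneq X 0; first by rewrite mulr0 !Ind_plus0l.
have [->|Y0] := eqVneq Y 0; first by rewrite mulr0 !Ind_plus0r.
rewrite !Ind_plusE !mulf_neq0 // X0 Y0 !mupM // ltn_add2l !PvalM mulrACA sgr_sqrM //.
by rewrite Pval_eq0.
Qed.

Lemma Ind_plusMr D X Y : D != 0 -> Ind_plus (X * D) (Y * D) x = Ind_plus X Y x.
Proof. by move=> D0; rewrite ![_ * D]mulrC Ind_plusMl. Qed.

Lemma SignPQMl D X Y : D != 0 -> SignPQ (D * X) (D * Y) x = SignPQ X Y x.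
Proof.
move=> D0; have [->|X0] := eqVneq X 0; first by rewrite mulr0 !SignPQ0l.
have [->|Y0] := eqVneq Y 0; first by rewrite mulr0 !SignPQE eqxx !andbF.
rewrite !SignPQE !mulf_neq0 // X0 Y0 !mupM // eqn_add2l !PvalM mulrACA sgr_sqrM //.
by rewrite Pval_eq0.
Qed.

Lemma Ind_plusDl_lt X E Y : X != 0 -> (mup x X < mup x E)%N ->
  Ind_plus (X + E) Y x = Ind_plus X Y x.
Proof. by move=> X0 /(mupD_lt X0) [XE0 mXE pXE]; rewrite !Ind_plusE XE0 X0 mXE pXE. Qed.

Lemma Ind_plusDl_ge X E Y : (mup x Y <= mup x E)%N ->
  Ind_plus (X + E) Y x = Ind_plus X Y x.
Proof.
move=> le_YE; have [X_lt|X_ge] := ltnP (mup x X) (mup x Y); last first.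
  rewrite [RHS]Ind_plus_ge //; have [->|XE0] := eqVneq (X + E) 0; first exact: Ind_plus0l.
  by rewrite Ind_plus_ge // (leq_trans _ (mupD_min x XE0)) // leq_min X_ge.
have [->|X0] := eqVneq X 0; first by rewrite add0r Ind_plus0l Ind_plus_ge.
exact/Ind_plusDl_lt/(leq_trans X_lt).
Qed.

Lemma Ind_plusDr X Y E : Y != 0 -> (mup x Y < mup x E)%N ->
  Ind_plus X (Y + E) x = Ind_plus X Y x.
Proof. by move=> Y0 /(mupD_lt Y0) [YE0 mYE pYE]; rewrite !Ind_plusE YE0 Y0 mYE pYE. Qed.

Lemma Ind_plusN_swap X Y : Ind_plus (- Y) X x =
  Ind_plus X Y x - 2^-1 * Num.sg (Pval X x * Pval Y x) + 2^-1 * SignPQ X Y x.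
Proof.
have [->|X0] := eqVneq X 0.
  by rewrite Ind_plus0r Ind_plus0l SignPQ0l Pval0 mul0r sgr0; ring.
have [->|Y0] := eqVneq Y 0.
  by rewrite oppr0 Ind_plus0l Ind_plus0r SignPQE eqxx andbF Pval0 mulr0 sgr0; ring.
rewrite !Ind_plusE SignPQE oppr_eq0 X0 Y0 mupN PvalN mulNr sgrN [Pval X x * _]mulrC /=.
by case: ltngtP => _; ring.
Qed.

End LocalIndex.

Section BadNumber.
Variable R : rcfType.
Implicit Types (P Q Rp S : {poly R}) (c : R).

Definition bad_numberb P Q Rp S c : bool :=
  [&& [&& P != 0, Q != 0, Rp != 0 & S != 0], (mup c P < mup c Q)%N,
      (mup c P + mup c S == mup c Rp + mup c Q)%N, P * S + Q * Rp != 0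
    & mup c (P * S + Q * Rp) == mup c (Q * S)].

Lemma bad_numberP P Q Rp S c : reflect (bad_number P Q Rp S c) (bad_numberb P Q Rp S c).
Proof.
rewrite /bad_number /bad_numberb /valx; apply: (iffP idP).
- case/and5P => /and4P[P0 Q0 R0 S0] lt_PQ /eqP eq_m B0 /eqP eq_B.
  rewrite (negPf P0) (negPf R0) (negPf B0) eq_B subrr; do 3!split => //.
  exists ((mup c P)%:Z - (mup c Q)%:Z); rewrite subr_lt0 ltz_nat; split => //.
  by split => //; congr Some; lia.
- case=> Q0 [S0 [[v [+ [+ v_lt0]]]]].
  case: eqP => // /eqP P0 [eq_PQ]; case: eqP => // /eqP R0 [eq_RS].
  case: eqP => // /eqP B0 [/eqP]; rewrite subr_eq0 eqz_nat => eq_B.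
  rewrite Q0 S0 eq_B -ltz_nat -subr_lt0 eq_PQ v_lt0 /= andbT.
  by apply/eqP; lia.
Qed.

Lemma bad_numberbC P Q Rp S c : bad_numberb Rp S P Q c = bad_numberb P Q Rp S c.
Proof.
rewrite /bad_numberb [S * P]mulrC [Rp * Q]mulrC addrC [S * Q]mulrC.
rewrite [(mup c Rp + _ == _)%N]eq_sym.
have -> : [&& Rp != 0, S != 0, P != 0 & Q != 0] = [&& P != 0, Q != 0, Rp != 0 & S != 0].
  by case: (P == 0); case: (Q == 0); case: (Rp == 0); case: (S == 0).
have [eq_m|] := eqVneq (mup c P + mup c S)%N (mup c Rp + mup c Q).
  by congr (_ && (_ && _)); apply/idP/idP; lia.
by rewrite !(andbF, andFb).
Qed.

Lemma bad_numberb_mirror P Q Rp S c :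
  bad_numberb (mirror P) (mirror Q) (mirror Rp) (mirror S) (- c) = bad_numberb P Q Rp S c.
Proof. by rewrite /bad_numberb -!mirrorM -mirrorD !mirror_eq0 !mup_mirror. Qed.

Definition sign_corr P Q Rp S c : R :=
  if bad_numberb P Q Rp S c then 0 else SignPQ (P * S + Q * Rp) (Q * S) c.

Lemma sign_corr_bad P Q Rp S c : bad_number P Q Rp S c -> sign_corr P Q Rp S c = 0.
Proof. by move=> /bad_numberP bad_c; rewrite /sign_corr bad_c. Qed.

Lemma sign_corr_good P Q Rp S c : ~ bad_number P Q Rp S c ->
  sign_corr P Q Rp S c = SignPQ (P * S + Q * Rp) (Q * S) c.
Proof. by move=> /bad_numberP /negPf good_c; rewrite /sign_corr good_c. Qed.

Lemma sign_corrC P Q Rp S c : sign_corr Rp S P Q c = sign_corr P Q Rp S c.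
Proof. by rewrite /sign_corr bad_numberbC addrC [S * P]mulrC [Rp * Q]mulrC [S * Q]mulrC. Qed.

Lemma sign_corr_mirror P Q Rp S c :
  sign_corr (mirror P) (mirror Q) (mirror Rp) (mirror S) (- c) = sign_corr P Q Rp S c.
Proof. by rewrite /sign_corr bad_numberb_mirror -!mirrorM -mirrorD SignPQ_mirror. Qed.

End BadNumber.

Section LocalFormula.
Variables (R : rcfType) (x : R) (P Q Rp S : {poly R}).
Hypotheses (P0 : P != 0) (Q0 : Q != 0) (R0 : Rp != 0) (S0 : S != 0).

Local Notation A := (P * Rp - Q * S).
Local Notation B := (P * S + Q * Rp).
Local Notation p := (Pval P x).
Local Notation q := (Pval Q x).
Local Notation r := (Pval Rp x).
Local Notation s := (Pval S x).

Let PR0 : P * Rp != 0. Proof. exact: mulf_neq0. Qed.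
Let QS0 : Q * S != 0. Proof. exact: mulf_neq0. Qed.
Let PS0 : P * S != 0. Proof. exact: mulf_neq0. Qed.
Let QR0 : Q * Rp != 0. Proof. exact: mulf_neq0. Qed.
Let mPR : mup x (P * Rp) = (mup x P + mup x Rp)%N. Proof. exact: mupM. Qed.
Let mQS : mup x (Q * S) = (mup x Q + mup x S)%N. Proof. exact: mupM. Qed.
Let mPS : mup x (P * S) = (mup x P + mup x S)%N. Proof. exact: mupM. Qed.
Let mQR : mup x (Q * Rp) = (mup x Q + mup x Rp)%N. Proof. exact: mupM. Qed.

Lemma Ind_plus_local_lt : (mup x P < mup x Q)%N ->
    (mup x P + mup x S < mup x Q + mup x Rp)%N ->
  Ind_plus A B x = Ind_plus P Q x + Ind_plus Rp S x
    - 2^-1 * Num.sg (Pval (B * (Q * S)) x) + 2^-1 * sign_corr P Q Rp S x.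
Proof.
move=> lt_PQ lt_PS_QR; rewrite -mPS -mQR in lt_PS_QR.
have [B0 mB pB] := mupD_lt PS0 lt_PS_QR.
have -> : sign_corr P Q Rp S x = 0.
  by rewrite /sign_corr SignPQ_neq ?if_same // mB mPS mQS eqn_add2r ltn_eqF.
rewrite Ind_plusDr // Ind_plusDl_ge; last by rewrite mupN mPS mQS leq_add2r ltnW.
rewrite Ind_plusMl //.
rewrite (Ind_plus_lt P0 Q0 lt_PQ) PvalM pB !PvalM mulrACA [_ * (s * s)]mulrC.
rewrite sgr_sqrM ?Pval_eq0 //.
ring.
Qed.

Lemma Ind_plus_local_eq : (mup x P < mup x Q)%N ->
    (mup x P + mup x S = mup x Q + mup x Rp)%N ->
  Ind_plus A B x = Ind_plus P Q x + Ind_plus Rp S x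
    - 2^-1 * Num.sg (Pval (B * (Q * S)) x) + 2^-1 * sign_corr P Q Rp S x.
Proof.
move=> lt_PQ eq_m; have lt_RS : (mup x Rp < mup x S)%N by lia.
have q0 : q != 0 by rewrite Pval_eq0.
have s0 : s != 0 by rewrite Pval_eq0.
have -> : sign_corr P Q Rp S x = 0.
  rewrite /sign_corr; case: ifP => // not_bad.
  have [->|B0] := eqVneq B 0; first exact: SignPQ0l.
  apply: SignPQ_neq; apply: contraFneq not_bad => eq_B.
  by rewrite /bad_numberb P0 Q0 R0 S0 lt_PQ B0 eq_B eqxx /= andbT; apply/eqP; lia.
rewrite Ind_plusDl_lt //; last by rewrite mupN mPR mQS; lia.
rewrite (Ind_plus_lt P0 Q0 lt_PQ) (Ind_plus_lt R0 S0 lt_RS) !PvalM.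
have eq_PS_QR : mup x (P * S) = mup x (Q * Rp) by rewrite mPS mQR.
have [cancel|nz] := eqVneq (Pval (P * S) x + Pval (Q * Rp) x) 0.
- have mB := mupD_eq_cancel PS0 QR0 eq_PS_QR cancel.
  rewrite !PvalM in cancel.
  have opp : Num.sg (p * q) + Num.sg (r * s) = 0.
    by have := sgr_cross p r q0 s0; rewrite cancel mulr0 mul0r sgr0; lra.
  have [->|B0] := eqVneq B 0; first by rewrite Ind_plus0r Pval0 mul0r sgr0; lra.
  have {}mB := mB B0; rewrite mPS in mB.
  rewrite Ind_plus_lt //; last by rewrite mPR (ltn_trans _ mB) // ltn_add2l.
  rewrite PvalM sgrM (sgr_cross_cancelM _ _ cancel) ?Pval_eq0 //.
  by rewrite [Num.sg (Pval B x * _)]sgrM; lra.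
- have [B0 mB pB] := mupD_eq PS0 QR0 eq_PS_QR nz.
  rewrite Ind_plus_lt // ?mB ?mPR ?mPS ?ltn_add2l // pB !PvalM sgr_cross //.
  by ring.
Qed.

Lemma Ind_plus_local_balanced : mup x P = mup x Q -> mup x Rp = mup x S ->
  (mup x (Q * S) < mup x B)%N -> Ind_plus A B x = Ind_plus (- (Q * S)) B x.
Proof.
move=> eq_PQ eq_RS lt_B; have B0 : B != 0 by apply: contraTneq lt_B => ->; rewrite mup0.
have NQS0 : - (Q * S) != 0 by rewrite oppr_eq0.
have eq_PS_QR : mup x (P * S) = mup x (Q * Rp) by rewrite mPS mQR eq_PQ eq_RS addnC.
have eq_PR_QS : mup x (P * Rp) = mup x (- (Q * S)) by rewrite mupN mPR mQS eq_PQ eq_RS.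
have cancel : p * s + q * r = 0.
  rewrite -!PvalM; apply/eqP; apply: contraTT lt_B => nz.
  have [_ -> _] := mupD_eq PS0 QR0 eq_PS_QR nz.
  by rewrite -leqNgt mPS mQS eq_PQ.
have sgA : Num.sg (p * r - q * s) = - Num.sg (q * s).
  by apply: sgr_cross_cancelB cancel; rewrite Pval_eq0.
have nzA : Pval (P * Rp) x + Pval (- (Q * S)) x != 0.
  by rewrite PvalN !PvalM -sgr_eq0 sgA oppr_eq0 sgr_eq0 mulf_neq0 ?Pval_eq0.
have [A0 mA pA] := mupD_eq PR0 NQS0 eq_PR_QS nzA.
have lt_A_B : (mup x A < mup x B)%N by rewrite mA eq_PR_QS mupN.
have lt_NQS_B : (mup x (- (Q * S)) < mup x B)%N by rewrite mupN.
rewrite (Ind_plus_lt A0 B0 lt_A_B) (Ind_plus_lt NQS0 B0 lt_NQS_B).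
by rewrite pA PvalN !PvalM !sgrM sgA sgrN.
Qed.

Lemma Ind_plus_local_ge : (mup x Q <= mup x P)%N -> (mup x S <= mup x Rp)%N ->
  Ind_plus A B x = Ind_plus P Q x + Ind_plus Rp S x
    - 2^-1 * Num.sg (Pval (B * (Q * S)) x) + 2^-1 * sign_corr P Q Rp S x.
Proof.
move=> le_QP le_SR; rewrite (Ind_plus_ge le_QP) (Ind_plus_ge le_SR).
have -> : sign_corr P Q Rp S x = SignPQ B (Q * S) x.
  by rewrite /sign_corr /bad_numberb ltnNge le_QP /= !andbF.
have [->|B0] := eqVneq B 0.
  by rewrite Ind_plus0r SignPQ0l mul0r Pval0 sgr0; ring.
have le_QS_B : (mup x (Q * S) <= mup x B)%N.
  apply: leq_trans (mupD_min x B0).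
  by rewrite leq_min mPS mQR mQS leq_add2r leq_add2l le_QP le_SR.
have swap := Ind_plusN_swap x B (Q * S).
rewrite (Ind_plus_ge le_QS_B) -PvalM in swap.
suff -> : Ind_plus A B x = Ind_plus (- (Q * S)) B x by rewrite swap; ring.
move: le_QS_B; rewrite leq_eqVlt => /orP[/eqP eq_B | lt_B].
  have le_B_PR : (mup x B <= mup x (P * Rp))%N by rewrite -eq_B mPR mQS; lia.
  have le_B_QS : (mup x B <= mup x (- (Q * S)))%N by rewrite mupN eq_B.
  by rewrite Ind_plusDl_ge // !Ind_plus_ge.
have [lt_QS_PR|le_PR_QS] := ltnP (mup x (Q * S)) (mup x (P * Rp)).
  by rewrite addrC Ind_plusDl_lt ?oppr_eq0 ?mupN.
by apply: Ind_plus_local_balanced => //; lia.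
Qed.

End LocalFormula.

Section LocalFormulaGeneral.
Variables (R : rcfType) (x : R).
Implicit Types (P Q Rp S : {poly R}).

Lemma Ind_plus_local_nz P Q Rp S : P != 0 -> Q != 0 -> Rp != 0 -> S != 0 ->
  Ind_plus (P * Rp - Q * S) (P * S + Q * Rp) x = Ind_plus P Q x + Ind_plus Rp S x
    - 2^-1 * Num.sg (Pval ((P * S + Q * Rp) * (Q * S)) x) + 2^-1 * sign_corr P Q Rp S x.
Proof.
wlog le_m : P Q Rp S / (mup x P + mup x S <= mup x Q + mup x Rp)%N => [wlog_le|] P0 Q0 R0 S0.
  have [le|lt] := leqP (mup x P + mup x S) (mup x Q + mup x Rp); first exact: wlog_le.
  have := wlog_le Rp S P Q _ R0 S0 P0 Q0; rewrite -sign_corrC.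
  rewrite [Rp * P]mulrC [S * Q]mulrC [Rp * Q]mulrC [S * P]mulrC [Q * Rp + _]addrC.
  by rewrite [Ind_plus Rp S x + _]addrC; apply; lia.
have [lt_PQ|le_QP] := ltnP (mup x P) (mup x Q); last by apply: Ind_plus_local_ge => //; lia.
move: le_m; rewrite leq_eqVlt => /orP[/eqP|]; first exact: Ind_plus_local_eq.
exact: Ind_plus_local_lt.
Qed.

Lemma Ind_plus_local P Q Rp S : (P != 0) || (Q != 0) -> (Rp != 0) || (S != 0) ->
  Ind_plus (P * Rp - Q * S) (P * S + Q * Rp) x = Ind_plus P Q x + Ind_plus Rp S x
    - 2^-1 * Num.sg (Pval ((P * S + Q * Rp) * (Q * S)) x) + 2^-1 * sign_corr P Q Rp S x.
Proof.
have corr0 P' Q' Rp' S' : Q' * S' = 0 -> sign_corr P' Q' Rp' S' x = 0.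
  by move=> QS0; rewrite /sign_corr QS0 SignPQE eqxx andbF if_same.
move=> PQ0 RS0; have [Q0|Q0] := eqVneq Q 0.
  rewrite Q0 eqxx orbF in PQ0; rewrite Q0 corr0 ?mul0r // subr0 addr0 mulr0 Pval0 sgr0.
  by rewrite Ind_plusMl // Ind_plus0r; ring.
have [S0|S0] := eqVneq S 0.
  rewrite S0 eqxx orbF in RS0; rewrite S0 corr0 ?mulr0 // subr0 add0r Pval0 sgr0.
  by rewrite Ind_plusMr // Ind_plus0r; ring.
have [->|P0] := eqVneq P 0.
  rewrite /sign_corr /bad_numberb eqxx /= !mul0r sub0r !add0r -mulrN Ind_plusMl //.
  rewrite SignPQMl // Ind_plus0l Ind_plusN_swap PvalM !PvalM mulrACA sgr_sqrM ?Pval_eq0 //.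
  by ring.
have [->|R0] := eqVneq Rp 0; last exact: Ind_plus_local_nz.
rewrite /sign_corr /bad_numberb eqxx !andbF /= !mulr0 sub0r addr0 -mulNr Ind_plusMr //.
rewrite [P * S]mulrC [Q * S]mulrC SignPQMl // Ind_plus0l Ind_plusN_swap PvalM !PvalM.
by rewrite mulrACA sgr_sqrM ?Pval_eq0 //; ring.
Qed.

End LocalFormulaGeneral.

Section LeftAndPointFormulas.
Variable R : rcfType.
Implicit Types (P Q Rp S : {poly R}) (x : R).

Lemma Ind_minus_local x P Q Rp S : (P != 0) || (Q != 0) -> (Rp != 0) || (S != 0) ->
  Ind_minus (P * Rp - Q * S) (P * S + Q * Rp) x = Ind_minus P Q x + Ind_minus Rp S x
    - 2^-1 * Num.sg (Pval_left ((P * S + Q * Rp) * (Q * S)) x) + 2^-1 * sign_corr P Q Rp S x.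
Proof.
move=> PQ0 RS0; rewrite !Ind_minus_mirror mirrorB mirrorD !mirrorM Ind_plus_local.
- by rewrite -!mirrorM -mirrorD -mirrorM Pval_mirror sign_corr_mirror.
- by rewrite !mirror_eq0.
- by rewrite !mirror_eq0.
Qed.

Lemma Ind_pt_local x P Q Rp S : (P != 0) || (Q != 0) -> (Rp != 0) || (S != 0) ->
  Ind_pt (P * Rp - Q * S) (P * S + Q * Rp) x = Ind_pt P Q x + Ind_pt Rp S x
    - 2^-1 * (Num.sg (Pval ((P * S + Q * Rp) * (Q * S)) x)
              - Num.sg (Pval_left ((P * S + Q * Rp) * (Q * S)) x)).
Proof. by move=> PQ0 RS0; rewrite /Ind_pt Ind_plus_local // Ind_minus_local //; ring. Qed.

End LeftAndPointFormulas.

Section CauchyIndexOnInterval.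
Variable R : rcfType.
Implicit Types (X Y T U : {poly R}) (a b c m z : R).

Lemma Ind_pt_nroot X Y z : ~~ root Y z -> Ind_pt X Y z = 0.
Proof.
move=> /mupNroot mY0.
by rewrite /Ind_pt Ind_minus_mirror !Ind_plus_ge ?mup_mirror ?mY0 // subrr.
Qed.

Lemma Ind_pt0r X z : Ind_pt X 0 z = 0.
Proof. by rewrite /Ind_pt Ind_minus_mirror mirror0 !Ind_plus0r subrr. Qed.

Lemma Ind_ab_cover X Y T a b : T != 0 -> (Y != 0 -> forall z, root Y z -> root T z) ->
  Ind_ab X Y a b = Ind_plus X Y a + \sum_(z <- roots T a b) Ind_pt X Y z - Ind_minus X Y b.
Proof.
move=> T0 sub_YT; congr (_ + _ - _); have [->|Y0] := eqVneq Y 0.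
  by rewrite roots0 big_nil big1_seq // => z _; apply: Ind_pt0r.
rewrite [RHS](bigID (mem (roots Y a b))) /= [X in _ = _ + X]big1_seq ?addr0; last first.
  move=> z /andP[zNY /roots_in z_ab]; apply: Ind_pt_nroot.
  by apply: contra zNY; apply: root_in_roots.
rewrite -[RHS]big_filter; apply/perm_big/uniq_perm; rewrite ?filter_uniq ?uniq_roots //.
move=> z; rewrite mem_filter andb_idr // => z_Y.
by move: (z_Y); rewrite !in_roots T0 => /and3P[/(sub_YT Y0) -> -> _].
Qed.

Lemma sgr_horner_right U a m : a < m -> (forall y, a < y <= m -> ~~ root U y) ->
  Num.sg U.[m] = Num.sg (Pval U a).
Proof.
move=> lt_am U_nroot; have U0 : U != 0.
  by apply: contraNneq (U_nroot m _) => [->|]; rewrite ?root0 ?lt_am ?lexx.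
have [r rNa defU] := mup_factor a U0.
have r_noroot : {in `[a, m], forall y, ~~ root r y}.
  move=> y; rewrite in_itv /= => /andP[le_ay le_ym].
  have [<-|neq_ay] := eqVneq a y; first exact: rNa.
  have := U_nroot y; rewrite lt_neqAle neq_ay le_ay le_ym defU rootM negb_or => /(_ isT).
  by case/andP.
have a_in : a \in `[a, m] by rewrite in_itv /= lexx ltW.
have m_in : m \in `[a, m] by rewrite in_itv /= lexx ltW.
rewrite {2}defU Pval_mul_XsubCX // -(polyrN0_itv r_noroot a_in m_in) {1}defU.
rewrite hornerM horner_exp hornerXsubC sgrM sgrX [Num.sg (m - a)]gtr0_sg ?subr_gt0 //.
by rewrite expr1n mulr1.
Qed.

Lemma sgr_horner_left U m c : m < c -> (forall y, m <= y < c -> ~~ root U y) ->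
  Num.sg U.[m] = Num.sg (Pval_left U c).
Proof.
move=> lt_mc U_nroot; rewrite -Pval_mirror -horner_mirror.
apply: sgr_horner_right; first by rewrite ltrN2.
move=> y /andP[lt_cy le_ym]; rewrite -[y]opprK root_mirror U_nroot //.
by rewrite lerNr ltrNl lt_cy le_ym.
Qed.

Lemma sgr_Pval_no_root U a c : a < c -> (forall y, a < y < c -> ~~ root U y) ->
  Num.sg (Pval U a) = Num.sg (Pval_left U c).
Proof.
move=> lt_ac U_nroot; pose m := (a + c) / 2.
have lt_am : a < m by rewrite /m; lra.
have lt_mc : m < c by rewrite /m; lra.
rewrite -(@sgr_horner_right U a m) // -?(@sgr_horner_left U m c) //.
- by move=> y /andP[le_my lt_yc]; rewrite U_nroot // (lt_le_trans lt_am le_my).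
- by move=> y /andP[lt_ay le_ym]; rewrite U_nroot // lt_ay (le_lt_trans le_ym lt_mc).
Qed.

Lemma sum_sgr_Pval_jumps U (L : seq R) a b : a < b -> path <%R a L -> all (fun z => z < b) L ->
  (forall y, a < y < b -> root U y -> y \in L) ->
  \sum_(z <- L) (Num.sg (Pval U z) - Num.sg (Pval_left U z)) =
  Num.sg (Pval_left U b) - Num.sg (Pval U a).
Proof.
elim: L a => [|z L IHL] a lt_ab /= => [_ _|/andP[lt_az path_zL] /andP[lt_zb lt_Lb]] cover.
  rewrite big_nil (sgr_Pval_no_root lt_ab) ?subrr // => y y_ab.
  by apply/negP => /(cover y y_ab).
have z_min : all (fun w => z < w) L by apply: order_path_min path_zL; apply: lt_trans.
rewrite big_cons (IHL z) //; last first.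
  move=> y /andP[lt_zy lt_yb] U_y.
  have := cover y; rewrite (lt_trans lt_az lt_zy) lt_yb inE.
  move=> /(_ isT U_y) /orP[/eqP eq_yz|//].
  by rewrite eq_yz ltxx in lt_zy.
rewrite (sgr_Pval_no_root lt_az); first by ring.
move=> y /andP[lt_ay lt_yz]; apply/negP => U_y.
have := cover y; rewrite lt_ay (lt_trans lt_yz lt_zb) inE => /(_ isT U_y) /orP[/eqP eq_yz|y_L].
  by rewrite eq_yz ltxx in lt_yz.
by have := allP z_min y y_L; rewrite ltNge (ltW lt_yz).
Qed.

Lemma sum_sgr_Pval_roots U T a b : a < b -> T != 0 ->
    (U != 0 -> forall z, root U z -> root T z) ->
  \sum_(z <- roots T a b) (Num.sg (Pval U z) - Num.sg (Pval_left U z)) =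
  Num.sg (Pval_left U b) - Num.sg (Pval U a).
Proof.
move=> lt_ab T0 sub_UT; have [->|U0] := eqVneq U 0.
  by rewrite Pval_left0 Pval0 sgr0 subrr big1 // => z _; rewrite Pval_left0 Pval0 sgr0 subrr.
apply: sum_sgr_Pval_jumps => //; first exact: path_roots.
  by apply/allP => z /roots_in; rewrite in_itv /= => /andP[].
by move=> y y_ab /(sub_UT U0) T_y; apply: root_in_roots.
Qed.

End CauchyIndexOnInterval.

Section GlobalFormula.
Variable R : rcfType.
Implicit Types (P Q Rp S Y : {poly R}) (a b z : R).

Lemma root_cover (s : seq {poly R}) : exists2 T : {poly R}, T != 0 &
  forall Y z, Y \in s -> Y != 0 -> root Y z -> root T z.
Proof.
exists (\prod_(Y <- s | Y != 0) Y) => [|Y z Y_s Y0 Y_z].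
  by rewrite prodf_seq_neq0; apply/allP => Y _; apply/implyP.
rewrite -big_filter; apply/negPn; rewrite root_bigmul.
by apply/allPn; exists Y; rewrite ?mem_filter ?Y0 ?Y_s ?Y_z.
Qed.

Lemma Ind_ab_mul P Q Rp S a b : (P != 0) || (Q != 0) -> (Rp != 0) || (S != 0) -> a < b ->
  Ind_ab (P * Rp - Q * S) (P * S + Q * Rp) a b =
  Ind_ab P Q a b + Ind_ab Rp S a b + 2^-1 * sign_corr P Q Rp S a - 2^-1 * sign_corr P Q Rp S b.
Proof.
move=> PQ0 RS0 lt_ab; have [T T0 cover] := root_cover [:: P * S + Q * Rp; Q; S].
have cover_QS : (P * S + Q * Rp) * (Q * S) != 0 ->
    forall z, root ((P * S + Q * Rp) * (Q * S)) z -> root T z.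
  rewrite !mulf_eq0 !negb_or => /and3P[B0 Q0 S0] z.
  by rewrite !rootM => /or3P[] /cover; apply; rewrite ?inE ?eqxx ?orbT.
rewrite !(Ind_ab_cover _ _ _ T0); try by move=> Y0 z /cover; apply; rewrite ?inE ?eqxx ?orbT.
have sum_pt : \sum_(z <- roots T a b) Ind_pt (P * Rp - Q * S) (P * S + Q * Rp) z
    - \sum_(z <- roots T a b) Ind_pt P Q z - \sum_(z <- roots T a b) Ind_pt Rp S z
    = - 2^-1 * (Num.sg (Pval_left ((P * S + Q * Rp) * (Q * S)) b)
                - Num.sg (Pval ((P * S + Q * Rp) * (Q * S)) a)).
  rewrite -(sum_sgr_Pval_roots lt_ab T0 cover_QS) -!sumrB mulr_sumr.
  apply: eq_bigr => z _.
  by rewrite Ind_pt_local //; lra.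
by rewrite Ind_plus_local // Ind_minus_local //; lra.
Qed.

End GlobalFormula.

Unset Implicit Arguments.

Theorem proposition2p4 (R : rcfType) (P Q Rp S : {poly R}) (a b : R) :
  ~ (P = 0 /\ Q = 0) -> ~ (Rp = 0 /\ S = 0) -> a < b ->
  (bad_number P Q Rp S a -> ~ bad_number P Q Rp S b ->
     Ind_ab (P * Rp - Q * S) (P * S + Q * Rp) a b
     = Ind_ab P Q a b + Ind_ab Rp S a b - 2^-1 * SignPQ (P * S + Q * Rp) (Q * S) b) /\
  (bad_number P Q Rp S b -> ~ bad_number P Q Rp S a ->
     Ind_ab (P * Rp - Q * S) (P * S + Q * Rp) a b
     = Ind_ab P Q a b + Ind_ab Rp S a b + 2^-1 * SignPQ (P * S + Q * Rp) (Q * S) a) /\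
  (bad_number P Q Rp S a -> bad_number P Q Rp S b ->
     Ind_ab (P * Rp - Q * S) (P * S + Q * Rp) a b
     = Ind_ab P Q a b + Ind_ab Rp S a b).
Proof.
move=> nPQ nRS lt_ab.
have PQ0 : (P != 0) || (Q != 0).
  by rewrite -negb_and; apply/negP => /andP[/eqP P0 /eqP Q0]; apply: nPQ.
have RS0 : (Rp != 0) || (S != 0).
  by rewrite -negb_and; apply/negP => /andP[/eqP R0 /eqP S0]; apply: nRS.
split; [|split] => bad1 bad2; have := Ind_ab_mul PQ0 RS0 lt_ab.
- by rewrite (sign_corr_bad bad1) (sign_corr_good bad2) => G; lra.
- by rewrite (sign_corr_bad bad1) (sign_corr_good bad2) => G; lra.
- by rewrite (sign_corr_bad bad1) (sign_corr_bad bad2) => G; lra.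
Qed.
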